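(* In the setting of the context, let $(\omega,u,p)\in W\times V\times Q$ solve the continuous problem and $(\omega_h,u_h,p_h)\in W_h\times V_h\times Q_h$ solve the discrete problem. Then \[ \|\mathrm{d}(\omega-\omega_h)\|_{L^2\Lambda^{n-1}}\le\inf_{\tau_h\in W_h}\|\mathrm{d}(\omega-\tau_h)\|_{L^2\Lambda^{n-1}},\qquad \|\mathrm{d}(u-u_h)\|_{L^2\Lambda^{n}}\le\inf_{v_h\in V_h}\|\mathrm{d}(u-v_h)\|_{L^2\Lambda^{n}}. \]
   Context: $\Omega\subset\mathbb{R}^n$, $n\ge2$, bounded contractible domain. $L^2\Lambda^k(\Omega)$: square-integrable differential $k$-forms with inner product $(a,b)_\Omega=\int_\Omega a\wedge\star b$; $H\Lambda^k(\Omega)=\{a\in L^2\Lambda^k:\mathrm{d}a\in L^2\Lambda^{k+1}\}$; $\mathrm{d}$ exterior derivative, $\mathrm{d}^*$ codifferential, $\mathrm{tr}$ boundary trace. The boundary $\Gamma=\partial\Omega$ is split twice into disjoint parts $\Gamma=\Gamma_\omega\cup\Gamma_t=\Gamma_n\cup\Gamma_\pi$; $\Gamma_1=\Gamma_t\cap\Gamma_n$, $\Gamma_2=\Gamma_t\cap\Gamma_\pi$, $\Gamma_4=\Gamma_\omega\cap\Gamma_\pi$. $W=\{\tau\in H\Lambda^{n-2}:\mathrm{tr}\,\tau=0\text{ on }\Gamma_\omega\}$; $V=\{v\in H\Lambda^{n-1}:\mathrm{tr}\,v=0\text{ on }\Gamma_n\}$ (modulo $\mathrm{d}^*$-free forms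 if $\Gamma_4\ne\emptyset$); $Q=L^2\Lambda^n$ (modulo constants if $\Gamma_\pi=\emptyset$). $\mathsf{a}(\tau,\kappa)=(\tau,\kappa)_\Omega$, $\mathsf{b}(v,q)=(\mathrm{d}v,q)_\Omega$, $\mathsf{c}(\tau,v)=(\mathrm{d}\tau,v)_\Omega$, $\mathsf{e}(v,w)=(\mathrm{d}v,\mathrm{d}w)_\Omega$; for data $f\in L^2\Lambda^{n-1}$, $g\in L^2\Lambda^n$, $u_{b,t}\in H^{1/2}\Lambda^{n-1}(\Gamma_t)$, $\Pi_b\in H^{1/2}\Lambda^n(\Gamma_\pi)$: $\mathsf{f}(v)=(v,f)_\Omega+\int_{\Gamma_2\cup\Gamma_4}\mathrm{tr}\,v\wedge\Pi_b$, $\mathsf{g}(q)=(q,g)_\Omega$, $\mathsf{h}(\tau)=-\int_{\Gamma_1\cup\Gamma_2}\mathrm{tr}\,\tau\wedge u_{b,t}$. Continuous problem: find $(\omega,u,p)\in W\times V\times Q$ with $\mathsf{a}(\tau,\omega)-\mathsf{c}(\tau,u)=\mathsf{h}(\tau)$ $\forall\tau\in W$, $\mathsf{e}(v,u)+\mathsf{c}(\omega,v)+\mathsf{b}(v,p)=\mathsf{f}(v)$ $\forall v\in V$, $\mathsf{b}(u,q)=\mathsf{g}(q)$ $\forall q\in Q$. Discrete spaces: finite-dimensional $W_h\subset W$, $V_h\subset V$, $Q_h\subset Q$ with $\mathrm{d}W_h\subset V_h$ and $\mathrm{d}V_h=Q_h$ (compatible spaces, e.g. the paper's mimetic spectral element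 spaces). The discrete problem is the same system posed on $W_h\times V_h\times Q_h$ with test functions in $W_h\times V_h\times Q_h$. *)

From HB Require Import structures.
From mathcomp Require Import all_boot all_order all_algebra.
From mathcomp Require Import all_classical reals.
Set Implicit Arguments. Unset Strict Implicit. Unset Printing Implicit Defensive.
Import Order.TTheory GRing.Theory Num.Theory.
Local Open Scope ring_scope.
Local Open Scope classical_set_scope.

Definition inner_product (R : realType) (E : lmodType R) (ip : E -> E -> R) :=
  [/\ forall x y, ip x y = ip y x,
      forall a x y z, ip (a *: x + y) z = a * ip x z + ip y z
    & forall x, x != 0 -> 0 < ip x x].

Definition ipnorm (R : realType) (E : lmodType R) (ip : E -> E -> R) (x : E) : R :=
  Num.sqrt (ip x x).

Definition subspace (R : realType) (E : lmodType R) (S : set E) :=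
  S 0 /\ forall (a : R) x y, S x -> S y -> S (a *: x + y).

Definition fin_dim (R : realType) (E : lmodType R) (S : set E) :=
  exists (m : nat) (b : 'I_m -> E),
    forall x, S x <-> exists c : 'I_m -> R, x = \sum_(i < m) c i *: b i.

(* The bilinear forms of the paper.
   E0 ~ H Lambda^{n-2}, E1 ~ H Lambda^{n-1}, E2 ~ L^2 Lambda^n,
   ip_k the L^2 inner products, d0, d1 the exterior derivatives. *)
Section Forms.
Variables (R : realType) (E0 E1 E2 : lmodType R).
Variables (ip0 : E0 -> E0 -> R) (ip1 : E1 -> E1 -> R) (ip2 : E2 -> E2 -> R).
Variables (d0 : E0 -> E1) (d1 : E1 -> E2).

Definition form_a (t k : E0) : R := ip0 t k.
Definition form_b (v : E1) (q : E2) : R := ip2 (d1 v) q.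
Definition form_c (t : E0) (v : E1) : R := ip1 (d0 t) v.
Definition form_e (v w : E1) : R := ip2 (d1 v) (d1 w).

Definition mixed_solution (W : set E0) (V : set E1) (Q : set E2)
    (f : E1 -> R) (g : E2 -> R) (h : E0 -> R) (om : E0) (u : E1) (p : E2) :=
  [/\ W om, V u & Q p] /\
  [/\ forall t, W t -> form_a t om - form_c t u = h t,
      forall v, V v -> form_e v u + form_c om v + form_b v p = f v
    & forall q, Q q -> form_b u q = g q].
End Forms.

(* Both estimates are instances of one fact: if d(x - x_h) is orthogonal to
   d(S_h) for a subspace S_h containing x_h, then for every s_h in S_h the
   difference d(x - s_h) splits orthogonally as d(x - x_h) + d(x_h - s_h), so
   by Pythagoras x_h is the best approximation of x in the d-seminorm.
   Galerkin orthogonality comes from testing both problems with the same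
   discrete functions: the vorticity error is tested with v = dτ_h, for which
   the e- and b-terms drop out since dd = 0; the velocity error is tested
   with q = dv_h, which lies in Q_h because dV_h = Q_h. *)
From HB Require Import structures.
From mathcomp Require Import all_boot all_order all_algebra.
From mathcomp Require Import all_classical reals.
Import Order.TTheory GRing.Theory Num.Theory.
Local Open Scope ring_scope.
Local Open Scope classical_set_scope.

Set Implicit Arguments.

Lemma subspaceB (R : realType) (E : lmodType R) (S : set E) x y :
  subspace S -> S x -> S y -> S (x - y).
Proof. by move=> [_ SZD] Sx Sy; rewrite addrC -scaleN1r; exact: SZD. Qed.

Section InnerProduct.
Variables (R : realType) (E : lmodType R) (ip : E -> E -> R).
Hypothesis ipE : inner_product ip.

Lemma ipC x y : ip x y = ip y x.
Proof. by case: ipE. Qed.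

Lemma ipDl x y z : ip (x + y) z = ip x z + ip y z.
Proof. by case: ipE => _ ipZD _; rewrite -[x]scale1r ipZD mul1r scale1r. Qed.

Lemma ipDr x y z : ip z (x + y) = ip z x + ip z y.
Proof. by rewrite !(ipC z) ipDl. Qed.

Lemma ip0l z : ip 0 z = 0.
Proof. by apply: (@addrI _ (ip 0 z)); rewrite -ipDl !addr0. Qed.

Lemma ipBl x y z : ip (x - y) z = ip x z - ip y z.
Proof.
rewrite ipDl; congr (_ + _).
by apply: (@addrI _ (ip y z)); rewrite -ipDl !subrr ip0l.
Qed.

Lemma ip_ge0 x : 0 <= ip x x.
Proof.
case: ipE => _ _ ip_gt0; have [->|/ip_gt0/ltW //] := eqVneq x 0.
by rewrite ip0l.
Qed.

Lemma ipnorm_le_orthD a b : ip a b = 0 -> ipnorm ip a <= ipnorm ip (a + b).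
Proof.
move=> ab0; have ipaa_b : ip (a + b) (a + b) = ip a a + ip b b.
  by rewrite ipDl !ipDr ab0 ipC ab0 addr0 add0r.
rewrite /ipnorm ler_sqrt ipaa_b ?lerDl ?ip_ge0 //.
by rewrite addr_ge0 ?ip_ge0.
Qed.

Lemma galerkin_best_approximation (X : lmodType R) (L : {linear X -> E})
    (S : set X) x xh :
  subspace S -> S xh ->
  (forall s, S s -> ip (L x) (L s) = ip (L xh) (L s)) ->
  ipnorm ip (L (x - xh)) <= inf [set ipnorm ip (L (x - s)) | s in S].
Proof.
move=> subS Sxh orth; apply: lb_le_inf.
  by exists (ipnorm ip (L (x - 0))), 0 => //; case: subS.
move=> _ [s Ss <-].
have -> : x - s = (x - xh) + (xh - s) by rewrite addrA subrK.
rewrite (linearD L (x - xh)); apply: ipnorm_le_orthD.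
by rewrite linearB ipBl orth ?subrr //; exact: subspaceB.
Qed.

End InnerProduct.

Section GalerkinOrthogonality.
Variables (R : realType) (E0 E1 E2 : lmodType R).
Variables (ip0 : E0 -> E0 -> R) (ip1 : E1 -> E1 -> R) (ip2 : E2 -> E2 -> R).
Variables (d0 : E0 -> E1) (d1 : E1 -> E2).
Variables (W Wh : set E0) (V Vh : set E1) (Q Qh : set E2).
Variables (f : E1 -> R) (g : E2 -> R) (h : E0 -> R).
Variables (om omh : E0) (u uh : E1) (p ph : E2).
Hypothesis sol : mixed_solution ip0 ip1 ip2 d0 d1 W V Q f g h om u p.
Hypothesis solh : mixed_solution ip0 ip1 ip2 d0 d1 Wh Vh Qh f g h omh uh ph.

Lemma vorticity_galerkin_orth : inner_product ip2 -> Vh `<=` V ->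
  forall v, Vh v -> d1 v = 0 -> ip1 (d0 om) v = ip1 (d0 omh) v.
Proof.
move=> ip2E VhV v Vhv dv0; case: sol => _ [_ eqV _]; case: solh => _ [_ eqVh _].
have := eqV v (VhV v Vhv); rewrite -(eqVh v Vhv).
by rewrite /form_e /form_b /form_c dv0 !ip0l // !add0r !addr0.
Qed.

Lemma velocity_galerkin_orth : Qh `<=` Q -> d1 @` Vh `<=` Qh ->
  forall v, Vh v -> ip2 (d1 u) (d1 v) = ip2 (d1 uh) (d1 v).
Proof.
move=> QhQ d1Vh v Vhv; have Qhdv : Qh (d1 v) by apply: d1Vh; exists v.
case: sol => _ [_ _ eqQ]; case: solh => _ [_ _ eqQh].
by have := eqQ _ (QhQ _ Qhdv); rewrite -(eqQh _ Qhdv).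
Qed.

End GalerkinOrthogonality.

Theorem proposition5p6 (R : realType) (E0 E1 E2 : lmodType R)
    (ip0 : E0 -> E0 -> R) (ip1 : E1 -> E1 -> R) (ip2 : E2 -> E2 -> R)
    (d0 : {linear E0 -> E1}) (d1 : {linear E1 -> E2})
    (W : set E0) (V : set E1) (Q : set E2)
    (Wh : set E0) (Vh : set E1) (Qh : set E2)
    (f : E1 -> R) (g : E2 -> R) (h : E0 -> R)
    (om omh : E0) (u uh : E1) (p ph : E2) :
  inner_product ip0 -> inner_product ip1 -> inner_product ip2 ->
  (forall x, d1 (d0 x) = 0) ->
  subspace W -> subspace V -> subspace Q ->
  subspace Wh -> subspace Vh -> subspace Qh ->
  fin_dim Wh -> fin_dim Vh -> fin_dim Qh ->
  Wh `<=` W -> Vh `<=` V -> Qh `<=` Q ->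
  d0 @` Wh `<=` Vh -> d1 @` Vh = Qh ->
  mixed_solution ip0 ip1 ip2 d0 d1 W V Q f g h om u p ->
  mixed_solution ip0 ip1 ip2 d0 d1 Wh Vh Qh f g h omh uh ph ->
  ipnorm ip1 (d0 (om - omh)) <= inf [set ipnorm ip1 (d0 (om - t)) | t in Wh] /\
  ipnorm ip2 (d1 (u - uh)) <= inf [set ipnorm ip2 (d1 (u - v)) | v in Vh].
Proof.
move=> _ ip1E ip2E dd _ _ _ subWh subVh _ _ _ _ _ VhV QhQ d0Wh d1Vh sol solh.
have [[Whomh Vhuh _] _] := solh.
split; apply: galerkin_best_approximation => // s Shs.
- apply: (vorticity_galerkin_orth sol solh ip2E VhV); last exact: dd.
  by apply: d0Wh; exists s.
- by apply: (velocity_galerkin_orth sol solh QhQ); rewrite ?d1Vh.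
Qed.
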